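(* Let $q$ be a square-free positive integer and let $k\ge 1$. Suppose $(a,b,2^k)\in T_q$ is primitive and that there is no primitive triple $(x,y,2^j)\in T_q$ with $1\le j<k$. Then for every primitive triple $(x,y,2^r)\in T_q$ with $r\ge k$ there exists $n\in\mathbb Z$ such that $[x,y,2^r]=n\cdot[a,b,2^k]$.
   Context: $T_q$ denotes the set of integer triples $(a,b,c)\in\mathbb Z\times\mathbb Z\times\mathbb Z_{>0}$ with $a^2+qb^2=c^2$; such a triple is primitive if $\gcd(a,b,c)=1$. Two triples $(a,b,c),(A,B,C)\in T_q$ are called equivalent if there exist nonzero integers $m,n$ with $(ma,mb,|m|c)=(nA,nB,|n|C)$; $[a,b,c]$ denotes the equivalence class and $\mathcal P_q$ the set of classes. $\mathcal P_q$ is an abelian group under the well-defined operation $[a,b,c]+[A,B,C]=[aA-qbB,\ aB+bA,\ cC]$, with identity $[1,0,1]$ and inverse $-[a,b,c]=[-a,b,c]$; for $n\in\mathbb Z$, $n\cdot x$ denotes the $n$-th multiple of $x$ in this group. *)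

From Stdlib Require Import ZArith Znumtheory.
Open Scope Z_scope.

Definition triple := (Z * Z * Z)%type.

Definition squarefree (q : Z) : Prop :=
  forall p : Z, prime p -> ~ (p * p | q).

Definition inT (q : Z) (t : triple) : Prop :=
  let '(a, b, c) := t in a ^ 2 + q * b ^ 2 = c ^ 2 /\ 0 < c.

Definition primitive (t : triple) : Prop :=
  let '(a, b, c) := t in Z.gcd (Z.gcd a b) c = 1.

(* Equivalence of triples: exist nonzero m n with (ma,mb,|m|c) = (nA,nB,|n|C).
   Equality of classes [t] = [t'] in P_q means exactly this. *)
Definition triple_equiv (t t' : triple) : Prop :=
  let '(a, b, c) := t in let '(A, B, C) := t' in
  exists m n : Z, m <> 0 /\ n <> 0 /\
    m * a = n * A /\ m * b = n * B /\ Z.abs m * c = Z.abs n * C.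

(* Group operation on representatives: [a,b,c] + [A,B,C] = [aA - qbB, aB + bA, cC]. *)
Definition tadd (q : Z) (t t' : triple) : triple :=
  let '(a, b, c) := t in let '(A, B, C) := t' in
  (a * A - q * b * B, a * B + b * A, c * C).

Definition tzero : triple := (1, 0, 1).
Definition tneg (t : triple) : triple :=
  let '(a, b, c) := t in (- a, b, c).

(* A representative of the n-th multiple n·[t] in the group P_q. *)
Definition tmul (q : Z) (n : Z) (t : triple) : triple :=
  if 0 <=? n then Nat.iter (Z.to_nat n) (tadd q t) tzero
  else Nat.iter (Z.to_nat (- n)) (tadd q (tneg t)) tzero.

From Stdlib Require Import ZArith Znumtheory Zpow_facts Lia.
Open Scope Z_scope.

(* A triple (a,b,c) is read as the point (a,b) of norm
   a^2 + q b^2 = c^2 in the ring Z[sqrt(-q)]; the group law on P_q is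
   multiplication of these points, and two triples of T_q are equivalent as
   soon as their points are proportional (cross product 0).  Hence it suffices
   to show that every primitive point of level r >= k (norm 4^r) is
   proportional to a representative of some multiple n.[g], g = [a,b,2^k].
   For q squarefree all coordinates of primitive points of positive level are
   odd.  If k >= 2, multiply a primitive (x,y) of level r by g or by its
   conjugate: one of y a -+ x b is divisible by 2^(2k-1), so the product is
   2^(2k-1) times a point of level r-k+1 < r, which is a multiple of a
   primitive point of level at most r-k+1.  Minimality of k rules out levels
   1..k-1 and level 0 only contains the identity, so strong induction on r
   concludes.  If k = 1 then q = 3 and (+-1,+-1) are the only primitive
   points, each proportional to g or to -g. *)

(* Points of Z[sqrt(-q)]: a + b sqrt(-q) is the pair (a,b). *)
Definition point := (Z * Z)%type.

Definition pt (t : triple) : point := let '(a, b, _) := t in (a, b).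

Definition pmul (q : Z) (u v : point) : point :=
  (fst u * fst v - q * snd u * snd v, fst u * snd v + snd u * fst v).

Definition pnorm (q : Z) (u : point) : Z := fst u ^ 2 + q * snd u ^ 2.

Definition pconj (u : point) : point := (fst u, - snd u).

(* cross u v = 0 says that u and v are proportional. *)
Definition cross (u v : point) : Z := fst u * snd v - snd u * fst v.

Lemma pt_tadd q t t' : pt (tadd q t t') = pmul q (pt t) (pt t').
Proof. destruct t as [[a b] c], t' as [[a' b'] c']; reflexivity. Qed.

Lemma pnorm_pmul q u v : pnorm q (pmul q u v) = pnorm q u * pnorm q v.
Proof. destruct u, v; unfold pnorm, pmul; cbn [fst snd]; ring. Qed.

Lemma pnorm_pconj q u : pnorm q (pconj u) = pnorm q u.
Proof. destruct u; unfold pnorm, pconj; cbn [fst snd]; ring. Qed.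

Lemma cross_sym u v : cross u v = 0 -> cross v u = 0.
Proof. unfold cross; lia. Qed.

Lemma cross_trans q u v w :
  pnorm q v <> 0 -> cross u v = 0 -> cross v w = 0 -> cross u w = 0.
Proof.
  intros Hv Huv Hvw.
  assert (E : pnorm q v * cross u w =
              fst v * (fst u * cross v w + fst w * cross u v)
              + q * snd v * (snd u * cross v w + snd w * cross u v))
    by (unfold pnorm, cross; ring).
  rewrite Huv, Hvw in E; ring_simplify in E.
  apply Z.mul_eq_0 in E as [E | E]; [contradiction | lia].
Qed.

Lemma cross_pmul q u v w : cross (pmul q u w) (pmul q v w) = cross u v * pnorm q w.
Proof. destruct u, v, w; unfold cross, pmul, pnorm; cbn [fst snd]; ring. Qed.

Lemma cross_pmul_cancel q u v w :
  pnorm q w <> 0 -> cross (pmul q u w) (pmul q v w) = 0 -> cross u v = 0.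
Proof.
  rewrite cross_pmul; intros Hw E.
  apply Z.mul_eq_0 in E as [E | E]; [exact E | contradiction].
Qed.

Lemma cross_pmul_pconj q u v w :
  cross (pmul q (pmul q u v) (pconj v)) w = pnorm q v * cross u w.
Proof. destruct u, v, w; unfold cross, pmul, pconj, pnorm; cbn [fst snd]; ring. Qed.

Lemma cross_scale s u v : cross (s * fst u, s * snd u) v = s * cross u v.
Proof. unfold cross; cbn [fst snd]; ring. Qed.

Lemma pnorm_pos q t : 0 < q -> inT q t -> 0 < pnorm q (pt t).
Proof.
  destruct t as [[a b] c]; unfold inT, pnorm; simpl.
  intros Hq [E Hc]; rewrite E; nia.
Qed.

Lemma inT_tadd q t t' : inT q t -> inT q t' -> inT q (tadd q t t').
Proof.
  destruct t as [[a b] c], t' as [[a' b'] c']; unfold inT, tadd; cbn beta iota.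
  intros [E Hc] [E' Hc']; split; [| nia].
  transitivity ((a ^ 2 + q * b ^ 2) * (a' ^ 2 + q * b' ^ 2)); [ring |].
  rewrite E, E'; ring.
Qed.

Lemma inT_tmul q n g : inT q g -> inT q (tmul q n g).
Proof.
  intros Hg.
  assert (Hiter : forall h m, inT q h -> inT q (Nat.iter m (tadd q h) tzero)).
  { intros h m Hh; induction m as [| m IH]; cbn [Nat.iter].
    - unfold inT, tzero; cbn beta iota; split; [ring | lia].
    - now apply inT_tadd. }
  unfold tmul; destruct (0 <=? n); apply Hiter; [exact Hg |].
  destruct g as [[a b] c]; unfold inT, tneg in *; cbn beta iota in *.
  destruct Hg as [E Hc]; split; [rewrite <- E; ring | exact Hc].
Qed.

Lemma tmul_succ q n g :
  0 <= n -> tmul q (n + 1) g = tadd q g (tmul q n g).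
Proof.
  intros Hn; unfold tmul.
  destruct (Z.leb_spec 0 n), (Z.leb_spec 0 (n + 1)); try lia.
  replace (Z.to_nat (n + 1)) with (S (Z.to_nat n)) by lia; reflexivity.
Qed.

Lemma tmul_pred q n g :
  n < 0 -> tmul q n g = tadd q (tneg g) (tmul q (n + 1) g).
Proof.
  intros Hn; unfold tmul.
  destruct (Z.leb_spec 0 n), (Z.leb_spec 0 (n + 1)); try lia.
  - now replace n with (-1) by lia.
  - replace (Z.to_nat (- n)) with (S (Z.to_nat (- (n + 1)))) by lia.
    reflexivity.
Qed.

(* The representative of (n+1).[g] is proportional to that of n.[g] times g
   (for n < 0 this uses g * conj g = N(g)). *)
Lemma cross_tmul_succ q n g :
  cross (pt (tmul q (n + 1) g)) (pmul q (pt (tmul q n g)) (pt g)) = 0.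
Proof.
  destruct (Z.leb_spec 0 n).
  - rewrite tmul_succ, pt_tadd by lia.
    destruct (pt g), (pt (tmul q n g)); unfold cross, pmul; cbn [fst snd]; ring.
  - rewrite (tmul_pred q n g), pt_tadd by lia.
    destruct g as [[a b] c]; simpl.
    destruct (pt (tmul q (n + 1) (a, b, c))); unfold cross, pmul; cbn [fst snd]; ring.
Qed.

Section Multiples.

Variables (q : Z) (g : triple).
Hypotheses (Hq : 0 < q) (Hg : inT q g).

Definition multiple_point (u : point) : Prop :=
  exists n : Z, cross u (pt (tmul q n g)) = 0.

Lemma pnorm_tmul_neq0 n : pnorm q (pt (tmul q n g)) <> 0.
Proof. pose proof (pnorm_pos q _ Hq (inT_tmul q n g Hg)); lia. Qed.

Lemma pnorm_g_neq0 : pnorm q (pt g) <> 0.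
Proof. pose proof (pnorm_pos q _ Hq Hg); lia. Qed.

Lemma multiple_scale s u : multiple_point u -> multiple_point (s * fst u, s * snd u).
Proof. intros [n Hn]; exists n; now rewrite cross_scale, Hn, Z.mul_0_r. Qed.

(* If u * g is a multiple of g, so is u (it is proportional to the previous
   multiple); if u * conj g is one, so is u (proportional to the next one). *)
Lemma multiple_of_pmul u : multiple_point (pmul q u (pt g)) -> multiple_point u.
Proof.
  intros [n Hn]; exists (n - 1).
  apply (cross_pmul_cancel q _ _ (pt g)); [exact pnorm_g_neq0 |].
  apply (cross_trans q _ (pt (tmul q n g))); [apply pnorm_tmul_neq0 | exact Hn |].
  pose proof (cross_tmul_succ q (n - 1) g) as Hs.
  now replace (n - 1 + 1) with n in Hs by ring.
Qed.

Lemma multiple_of_pmul_pconj u :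
  multiple_point (pmul q u (pconj (pt g))) -> multiple_point u.
Proof.
  intros [n Hn]; exists (n + 1).
  assert (Hc : pnorm q (pconj (pt g)) <> 0)
    by (rewrite pnorm_pconj; exact pnorm_g_neq0).
  apply cross_sym, (cross_pmul_cancel q _ _ (pconj (pt g))); [exact Hc |].
  apply (cross_trans q _ (pmul q (pmul q (pt (tmul q n g)) (pt g)) (pconj (pt g)))).
  - rewrite !pnorm_pmul; apply Z.neq_mul_0; split; [| exact Hc].
    apply Z.neq_mul_0; split; [apply pnorm_tmul_neq0 | exact pnorm_g_neq0].
  - rewrite cross_pmul, cross_tmul_succ; ring.
  - rewrite cross_pmul_pconj, (cross_sym _ _ Hn); ring.
Qed.

End Multiples.

(* Proportional points give equivalent triples: if (a,b) and (A,B) are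
   proportional, then m = a A + q b B and n = c^2 witness [a,b,c] = [A,B,C]. *)
Lemma equiv_of_cross q t t' :
  0 < q -> inT q t -> inT q t' -> cross (pt t) (pt t') = 0 -> triple_equiv t t'.
Proof.
  destruct t as [[a b] c], t' as [[A B] C]; unfold inT, triple_equiv, cross, pt.
  cbn beta iota; cbn [fst snd]. intros Hq [E Hc] [E' HC] Hx.
  assert (Ha : (a * A + q * b * B) * a = c ^ 2 * A).
  { rewrite <- E; transitivity ((a ^ 2 + q * b ^ 2) * A + q * b * (a * B - b * A));
      [ring | rewrite Hx; ring]. }
  assert (Hb : (a * A + q * b * B) * b = c ^ 2 * B).
  { rewrite <- E; transitivity ((a ^ 2 + q * b ^ 2) * B - a * (a * B - b * A));
      [ring | rewrite Hx; ring]. }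
  exists (a * A + q * b * B), (c ^ 2).
  assert (Hm : (a * A + q * b * B) ^ 2 = (c * C) ^ 2).
  { apply (Z.mul_reg_l _ _ (c ^ 2)); [nia |].
    transitivity (((a * A + q * b * B) * a) ^ 2 + q * ((a * A + q * b * B) * b) ^ 2).
    - rewrite <- E; ring.
    - rewrite Ha, Hb.
      transitivity (c ^ 2 * c ^ 2 * (A ^ 2 + q * B ^ 2)); [ring | rewrite E'; ring]. }
  assert (HcC : 0 < c * C) by (apply Z.mul_pos_pos; assumption).
  assert (Habs : Z.abs (a * A + q * b * B) = c * C).
  { apply (Z.pow_inj_l _ _ 2); [apply Z.abs_nonneg | lia | lia |].
    rewrite <- Z.pow_even_abs by (exists 1; reflexivity); exact Hm. }
  assert (Hc2 : 0 < c ^ 2) by (apply Z.pow_pos_nonneg; lia).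
  rewrite Habs, (Z.abs_eq (c ^ 2)) by lia.
  repeat split; [| lia | exact Ha | exact Hb | ring].
  intros Hm0; rewrite Hm0 in Habs; simpl in Habs; lia.
Qed.

Lemma odd_square u : Z.Odd u -> exists m, u ^ 2 = 8 * m + 1.
Proof.
  intros [t ->].
  destruct (Z.Even_or_Odd t) as [[s ->] | [s ->]];
    [exists (s * (2 * s + 1)) | exists ((s + 1) * (2 * s + 1))]; ring.
Qed.

Lemma gcd_pow2_odd n u : 0 <= n -> Z.Odd u -> Z.gcd (2 ^ n) u = 1.
Proof.
  intros Hn Hu; apply Zgcd_1_rel_prime, rel_prime_sym, rel_prime_Zpower_r; [exact Hn |].
  apply rel_prime_sym, prime_rel_prime; [exact prime_2 |].
  destruct Hu as [t Ht]; intros [s Hs]; lia.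
Qed.

(* If u + w is odd, one of u, w is odd, so a power of 2 dividing u w divides
   the other factor. *)
Lemma pow2_divides_a_factor m u w :
  0 <= m -> Z.Odd (u + w) -> (2 ^ m | u * w) -> (2 ^ m | u) \/ (2 ^ m | w).
Proof.
  intros Hm Huw Hd.
  destruct (Z.Even_or_Odd u) as [Hu | Hu].
  - left; rewrite Z.mul_comm in Hd; apply (Z.gauss _ w); [exact Hd |].
    apply gcd_pow2_odd; [exact Hm |].
    destruct Hu as [s Hs], Huw as [t Ht]; exists (t - s); lia.
  - right; apply (Z.gauss _ u); [exact Hd | now apply gcd_pow2_odd].
Qed.

Lemma pow2_divides_square n X : 0 <= n -> (2 ^ n * 2 ^ n | X * X) -> (2 ^ n | X).
Proof.
  intros Hn; revert X; pattern n; apply natlike_ind; [| | exact Hn].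
  - intros X _; apply Z.divide_1_l.
  - clear n Hn; intros n Hn IH X Hd; rewrite Z.pow_succ_r in * by exact Hn.
    assert (H2 : (2 | X * X)).
    { apply (Z.divide_trans _ (2 * 2 ^ n * (2 * 2 ^ n))); [| exact Hd].
      exists (2 ^ n * 2 ^ n * 2); ring. }
    destruct (prime_mult 2 prime_2 X X H2) as [[Y ->] | [Y ->]];
      destruct Hd as [t Ht];
      (destruct (IH Y) as [s ->]; [exists t; lia |]);
      exists s; ring.
Qed.

Lemma primitive_of_odd u v t :
  0 <= t -> Z.Odd u \/ Z.Odd v -> primitive (u, v, 2 ^ t).
Proof.
  intros Ht Huv; unfold primitive.
  assert (Hd : (Z.gcd (Z.gcd u v) (2 ^ t) | 1)).
  { destruct Huv as [Hu | Hv].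
    - rewrite <- (gcd_pow2_odd t u Ht Hu).
      apply Z.gcd_greatest; [apply Z.gcd_divide_r |].
      apply (Z.divide_trans _ (Z.gcd u v)); [apply Z.gcd_divide_l | apply Z.gcd_divide_l].
    - rewrite <- (gcd_pow2_odd t v Ht Hv).
      apply Z.gcd_greatest; [apply Z.gcd_divide_r |].
      apply (Z.divide_trans _ (Z.gcd u v)); [apply Z.gcd_divide_l | apply Z.gcd_divide_r]. }
  apply Z.divide_1_r in Hd; pose proof (Z.gcd_nonneg (Z.gcd u v) (2 ^ t)); lia.
Qed.

(* For squarefree q, a primitive triple (x, y, 2^r) with r >= 1 has x, y odd:
   both even contradicts primitivity, and exactly one odd forces 4 | q. *)
Lemma odd_of_primitive q r x y :
  squarefree q -> 1 <= r -> inT q (x, y, 2 ^ r) -> primitive (x, y, 2 ^ r) ->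
  Z.Odd x /\ Z.Odd y.
Proof.
  intros Hsq Hr [E _] Hp; unfold primitive in Hp.
  replace (2 ^ r) with (2 * 2 ^ (r - 1)) in E, Hp
    by (rewrite <- Z.pow_succ_r by lia; f_equal; lia).
  set (P := 2 ^ (r - 1)) in *.
  destruct (Z.Even_or_Odd x) as [[x1 Hx] | Hx], (Z.Even_or_Odd y) as [[y1 Hy] | Hy].
  - exfalso.
    assert (Hd : (2 | Z.gcd (Z.gcd x y) (2 * P))).
    { apply Z.gcd_greatest; [apply Z.gcd_greatest; [exists x1 | exists y1] | exists P]; lia. }
    rewrite Hp in Hd; apply Z.divide_pos_le in Hd; lia.
  - exfalso; destruct Hy as [y1 Hy]; subst x y.
    apply (Hsq 2 prime_2); exists (P ^ 2 - x1 ^ 2 - q * y1 ^ 2 - q * y1); nia.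
  - exfalso; destruct Hx as [x1 Hx]; subst x y; nia.
  - split; assumption.
Qed.

Lemma primitive_descent q t u v :
  0 <= t -> u ^ 2 + q * v ^ 2 = (2 ^ t) ^ 2 ->
  exists t' u' v' s, 0 <= t' <= t /\ inT q (u', v', 2 ^ t') /\
    primitive (u', v', 2 ^ t') /\ u = s * u' /\ v = s * v'.
Proof.
  intros Ht; revert u v; pattern t; apply natlike_ind; [| | exact Ht].
  - intros u v E; exists 0, u, v, 1.
    split; [lia | split; [split; [exact E | lia] | split; [apply Z.gcd_1_r | lia]]].
  - clear t Ht; intros t Ht IH u v E.
    assert (Hpos : 0 < 2 ^ Z.succ t) by (apply Z.pow_pos_nonneg; lia).
    assert (Hself : Z.Odd u \/ Z.Odd v -> exists t' u' v' s, 0 <= t' <= Z.succ t /\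
              inT q (u', v', 2 ^ t') /\ primitive (u', v', 2 ^ t') /\ u = s * u' /\ v = s * v').
    { intros Hodd; exists (Z.succ t), u, v, 1.
      split; [lia | split; [split; [exact E | exact Hpos] | split; [| lia]]].
      apply primitive_of_odd; [lia | exact Hodd]. }
    destruct (Z.Even_or_Odd u) as [[u1 Hu] | Hu]; [| now apply Hself; left].
    destruct (Z.Even_or_Odd v) as [[v1 Hv] | Hv]; [| now apply Hself; right].
    subst u v; rewrite Z.pow_succ_r in E by exact Ht.
    assert (E1 : u1 ^ 2 + q * v1 ^ 2 = (2 ^ t) ^ 2) by nia.
    destruct (IH u1 v1 E1) as (t' & u' & v' & s & Ht' & Hin & Hp & -> & ->).
    exists t', u', v', (2 * s).
    split; [lia | split; [exact Hin | split; [exact Hp | split; ring]]].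
Qed.

Lemma divide_out_pow2 q s m X Y :
  0 <= s <= m -> X ^ 2 + q * Y ^ 2 = (2 ^ m) ^ 2 -> (2 ^ s | Y) ->
  exists X' Y', X = 2 ^ s * X' /\ Y = 2 ^ s * Y' /\
    X' ^ 2 + q * Y' ^ 2 = (2 ^ (m - s)) ^ 2.
Proof.
  intros Hs E [Y' ->].
  assert (Hm : 2 ^ m = 2 ^ s * 2 ^ (m - s))
    by (rewrite <- Z.pow_add_r by lia; f_equal; ring).
  assert (Hpos : 0 < 2 ^ s) by (apply Z.pow_pos_nonneg; lia).
  destruct (pow2_divides_square s X) as [X' ->]; [lia | |].
  - exists ((2 ^ (m - s)) ^ 2 - q * Y' ^ 2).
    rewrite Hm in E; nia.
  - exists X', Y'; repeat split; try ring.
    apply (Z.mul_reg_l _ _ ((2 ^ s) ^ 2)); [nia |].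
    rewrite Hm in E.
    transitivity ((X' * 2 ^ s) ^ 2 + q * (Y' * 2 ^ s) ^ 2); [ring | rewrite E; ring].
Qed.

(* The key congruence: for odd points of norms 4^k and 4^r (k <= r), one of
   y a - x b and y a + x b is divisible by 2^(2k-1).  Indeed their product is
   4^k (y^2 - b^2 4^(r-k)) and their halves have odd sum y a. *)
Lemma conjugate_products_divisibility q k r a b x y :
  1 <= k <= r -> Z.Odd a -> Z.Odd b -> Z.Odd x -> Z.Odd y ->
  a ^ 2 + q * b ^ 2 = (2 ^ k) ^ 2 -> x ^ 2 + q * y ^ 2 = (2 ^ r) ^ 2 ->
  (2 ^ (2 * k - 1) | y * a - x * b) \/ (2 ^ (2 * k - 1) | y * a + x * b).
Proof.
  intros Hk [a1 Ha] [b1 Hb] [x1 Hx] [y1 Hy] Ea Ex.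
  set (u := y1 * a - x1 * b + a1 - b1).
  set (w := y1 * a + x1 * b + a1 + b1 + 1).
  assert (Hu : y * a - x * b = 2 * u) by (unfold u; subst; ring).
  assert (Hw : y * a + x * b = 2 * w) by (unfold w; subst; ring).
  assert (Hk2 : (2 ^ k) ^ 2 = 4 * 2 ^ (2 * k - 2))
    by (rewrite <- Z.pow_mul_r, <- (Z.pow_add_r 2 2) by lia; f_equal; lia).
  assert (Hr : 2 ^ r = 2 ^ k * 2 ^ (r - k))
    by (rewrite <- Z.pow_add_r by lia; f_equal; ring).
  assert (Hd : 2 ^ (2 * k - 1) = 2 * 2 ^ (2 * k - 2))
    by (rewrite <- Z.pow_succ_r by lia; f_equal; lia).
  assert (Huw : u * w = 2 ^ (2 * k - 2) * (y ^ 2 - b ^ 2 * (2 ^ (r - k)) ^ 2)).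
  { apply (Z.mul_reg_l _ _ 4); [lia |].
    transitivity ((y * a - x * b) * (y * a + x * b)); [rewrite Hu, Hw; ring |].
    transitivity (y ^ 2 * (a ^ 2 + q * b ^ 2) - b ^ 2 * (x ^ 2 + q * y ^ 2)); [ring |].
    transitivity ((2 ^ k) ^ 2 * (y ^ 2 - b ^ 2 * (2 ^ (r - k)) ^ 2));
      [rewrite Ea, Ex, Hr; ring | rewrite Hk2; ring]. }
  assert (Hodd : Z.Odd (u + w)).
  { exists (2 * y1 * a1 + y1 + a1); unfold u, w; subst; ring. }
  rewrite Hu, Hw, Hd.
  destruct (pow2_divides_a_factor (2 * k - 2) u w) as [[s Hs] | [s Hs]];
    [lia | exact Hodd | exists (y ^ 2 - b ^ 2 * (2 ^ (r - k)) ^ 2); rewrite Huw; ring | |];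
    [left | right]; exists s; rewrite Hs; ring.
Qed.

Section Descent.

Variables (q k a b : Z).
Hypotheses (Hq : 0 < q) (Hsq : squarefree q) (Hk : 2 <= k)
  (Hg : inT q (a, b, 2 ^ k)) (Hgp : primitive (a, b, 2 ^ k))
  (Hmin : ~ (exists (x y j : Z), 1 <= j < k /\ inT q (x, y, 2 ^ j) /\ primitive (x, y, 2 ^ j))).

Local Notation g := (a, b, 2 ^ k).

Definition primitive_multiples_at (r : Z) : Prop :=
  forall x y, inT q (x, y, 2 ^ r) -> primitive (x, y, 2 ^ r) -> multiple_point q g (x, y).

(* An odd pair (a,b) with a^2 + b^2 divisible by 4 is impossible, so q <> 1. *)
Lemma q_neq_1 : q <> 1.
Proof.
  intros ->.
  destruct (odd_of_primitive 1 k a b Hsq ltac:(lia) Hg Hgp) as [Ha Hb].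
  destruct (odd_square a Ha) as [m Hm], (odd_square b Hb) as [m' Hm'].
  destruct Hg as [E _].
  replace (2 ^ k) with (2 * 2 ^ (k - 1)) in E by (rewrite <- Z.pow_succ_r by lia; f_equal; lia).
  lia.
Qed.

(* Below level k the only primitive points are (+-1, 0), proportional to the
   identity 0.[g]. *)
Lemma multiples_below_k j : j < k -> primitive_multiples_at j.
Proof.
  intros Hj x y Hin Hp.
  assert (Hj0 : 0 <= j).
  { destruct (Z_lt_le_dec j 0) as [Hneg | Hnn]; [| exact Hnn].
    destruct Hin as [_ Hc]; rewrite Z.pow_neg_r in Hc by exact Hneg; lia. }
  destruct (Z.eq_dec j 0) as [-> | Hjne];
    [| exfalso; apply Hmin; exists x, y, j; split; [lia | split; assumption]].
  destruct Hin as [E _]; change ((2 ^ 0) ^ 2) with 1 in E.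
  assert (Hy : y = 0).
  { pose proof q_neq_1; destruct (Z.eq_dec y 0) as [| Hy]; [assumption |]; nia. }
  exists 0; subst y; unfold cross; simpl; ring.
Qed.

Lemma multiple_of_divisible_point r P :
  k <= r -> (forall j, 0 <= j < r -> primitive_multiples_at j) ->
  pnorm q P = (2 ^ (r + k)) ^ 2 -> (2 ^ (2 * k - 1) | snd P) -> multiple_point q g P.
Proof.
  intros Hr IH EP HY; destruct P as [X Y]; cbn [snd] in HY.
  destruct (divide_out_pow2 q (2 * k - 1) (r + k) X Y) as (X' & Y' & -> & -> & E');
    [lia | exact EP | exact HY |].
  destruct (primitive_descent q (r + k - (2 * k - 1)) X' Y') as
    (t & u & v & s & Ht & Hin & Hp & -> & ->); [lia | exact E' |].
  apply (multiple_scale q g (2 ^ (2 * k - 1)) (s * u, s * v)).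
  apply (multiple_scale q g s (u, v)).
  apply (IH t); [lia | exact Hin | exact Hp].
Qed.

(* Multiplying a primitive (x, y) of level r >= k by g or conj g gives a point
   as in the previous lemma; dividing the factor back out concludes. *)
Lemma descent_step r :
  k <= r -> (forall j, 0 <= j < r -> primitive_multiples_at j) -> primitive_multiples_at r.
Proof.
  intros Hr IH x y Hin Hp.
  destruct (odd_of_primitive q k a b Hsq ltac:(lia) Hg Hgp) as [Ha Hb].
  destruct (odd_of_primitive q r x y Hsq ltac:(lia) Hin Hp) as [Hx Hy].
  destruct Hg as [Ea _], Hin as [Ex _].
  assert (Hnorm : forall G, pnorm q G = (2 ^ k) ^ 2 ->
                    pnorm q (pmul q (x, y) G) = (2 ^ (r + k)) ^ 2).
  { intros G HG; rewrite pnorm_pmul, HG; unfold pnorm; cbn [fst snd].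
    rewrite Ex, Z.pow_add_r by lia; ring. }
  destruct (conjugate_products_divisibility q k r a b x y) as [Hd | Hd];
    [lia | assumption .. | |].
  - apply (multiple_of_pmul_pconj q g Hq Hg).
    apply (multiple_of_divisible_point r); [exact Hr | exact IH | |].
    + apply Hnorm; rewrite pnorm_pconj; exact Ea.
    + cbn; replace (x * - b + y * a) with (y * a - x * b) by ring; exact Hd.
  - apply (multiple_of_pmul q g Hq Hg).
    apply (multiple_of_divisible_point r); [exact Hr | exact IH | apply Hnorm, Ea |].
    cbn; replace (x * b + y * a) with (y * a + x * b) by ring; exact Hd.
Qed.

Lemma primitive_multiples_all r : 0 <= r -> primitive_multiples_at r.
Proof.
  apply (Z_lt_induction primitive_multiples_at); intros j IH.
  destruct (Z_lt_le_dec j k) as [Hj | Hj].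
  - exact (multiples_below_k j Hj).
  - exact (descent_step j Hj IH).
Qed.

End Descent.

Lemma odd_norm_four q a b :
  0 < q -> Z.Odd a -> Z.Odd b -> a ^ 2 + q * b ^ 2 = 4 -> a ^ 2 = 1 /\ b ^ 2 = 1 /\ q = 3.
Proof.
  intros Hq Ha Hb E.
  destruct (odd_square a Ha) as [m Hm], (odd_square b Hb) as [m' Hm'].
  assert (0 <= m) by nia. assert (0 <= m') by nia.
  assert (m' = 0) by nia.
  subst m'; assert (m = 0) by nia. lia.
Qed.

(* The case k = 1: then q = 3, no primitive point has level r >= 2 (the norm
   would be 4 modulo 8), and the level-one points are +-g and +-conj g. *)
Lemma level_one_multiples q a b :
  0 < q -> squarefree q -> inT q (a, b, 2 ^ 1) -> primitive (a, b, 2 ^ 1) ->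
  forall x y r, 1 <= r -> inT q (x, y, 2 ^ r) -> primitive (x, y, 2 ^ r) ->
  multiple_point q (a, b, 2 ^ 1) (x, y).
Proof.
  intros Hq Hsq Hg Hgp x y r Hr Hin Hp.
  destruct (odd_of_primitive q 1 a b Hsq ltac:(lia) Hg Hgp) as [Ha Hb].
  destruct (odd_of_primitive q r x y Hsq Hr Hin Hp) as [Hx Hy].
  destruct Hg as [Ea _], Hin as [Ex _].
  destruct (odd_norm_four q a b Hq Ha Hb Ea) as (Ha2 & Hb2 & ->).
  assert (Hr1 : r = 1).
  { destruct (Z.eq_dec r 1) as [| Hr1]; [assumption | exfalso].
    replace (2 ^ r) with (4 * 2 ^ (r - 2)) in Ex
      by (rewrite <- (Z.pow_add_r 2 2) by lia; f_equal; lia).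
    destruct (odd_square x Hx) as [m Hm], (odd_square y Hy) as [m' Hm'].
    rewrite Z.pow_mul_l in Ex; lia. }
  subst r; destruct (odd_norm_four 3 x y Hq Hx Hy Ex) as (Hx2 & Hy2 & _).
  assert (Hprod : (x * b - y * a) * (x * b + y * a) = 0).
  { transitivity (x ^ 2 * b ^ 2 - y ^ 2 * a ^ 2); [ring |].
    rewrite Hx2, Hy2, Ha2, Hb2; ring. }
  apply Z.mul_eq_0 in Hprod as [H | H]; [exists 1 | exists (-1)];
    unfold cross; simpl; lia.
Qed.

Theorem theorem3 (q : Z) (k : Z) (a b : Z) :
  0 < q -> squarefree q -> 1 <= k ->
  inT q (a, b, 2 ^ k) -> primitive (a, b, 2 ^ k) ->
  ~ (exists (x y j : Z), 1 <= j < k /\ inT q (x, y, 2 ^ j) /\ primitive (x, y, 2 ^ j)) ->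
  forall (x y r : Z), k <= r -> inT q (x, y, 2 ^ r) -> primitive (x, y, 2 ^ r) ->
  exists n : Z, triple_equiv (x, y, 2 ^ r) (tmul q n (a, b, 2 ^ k)).
Proof.
  intros Hq Hsq Hk Hg Hgp Hmin x y r Hr Hin Hp.
  assert (Hmult : multiple_point q (a, b, 2 ^ k) (x, y)).
  { destruct (Z.eq_dec k 1) as [-> | Hk1].
    - exact (level_one_multiples q a b Hq Hsq Hg Hgp x y r Hr Hin Hp).
    - exact (primitive_multiples_all q k a b Hq Hsq ltac:(lia) Hg Hgp Hmin r ltac:(lia) x y Hin Hp). }
  destruct Hmult as [n Hn]; exists n.
  apply (equiv_of_cross q); [exact Hq | exact Hin | apply inT_tmul, Hg | exact Hn].
Qed.
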